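(* Let $n\ge2$, let $G$ be an absolutely continuous distribution function on $[0,\infty)$, and $\alpha_1,\dots,\alpha_n,\alpha^*_1,\dots,\alpha^*_n>0$. Let $\phi_1,\phi_2$ be Archimedean generators with pseudo-inverses $\psi_1,\psi_2$. Let $\boldsymbol{X}=(X_1,\dots,X_n)$ have joint distribution function $\phi_1\big(\sum_{i=1}^n\psi_1([G(x_i)]^{\alpha_i})\big)$ and $\boldsymbol{X}^*$ have joint distribution function $\phi_2\big(\sum_{i=1}^n\psi_2([G(x_i)]^{\alpha^*_i})\big)$ (proportional reversed hazard marginals with Archimedean copulas). If $\phi_1$ or $\phi_2$ is log-convex, $\psi_2\circ\phi_1$ is super-additive, and $\prod_{i=1}^{j}\alpha^*_{[i]}\le\prod_{i=1}^{j}\alpha_{[i]}$ for all $j=1,\dots,n$, then $X_{n:n}\ge_{\rm st}X^*_{n:n}$.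
   Context: An Archimedean generator is an $n$-monotone function $\phi:[0,\infty)\to[0,1]$ with $\phi(0)=1$, $\lim_{x\to\infty}\phi(x)=0$ ($n$-monotone: $(-1)^k\phi^{(k)}\ge0$ for $k=0,\dots,n-2$ and $(-1)^{n-2}\phi^{(n-2)}$ decreasing and convex); $\psi=\phi^{-1}$ is its pseudo-inverse. $h$ super-additive means $h(x+y)\ge h(x)+h(y)$ for $x,y\ge0$. $\alpha_{[1]}\ge\dots\ge\alpha_{[n]}$ are the components in decreasing order. $X_{n:n}=\max_i X_i$. $X\le_{\rm st}Y$ means $P(X>x)\le P(Y>x)$ for all $x$. *)

From HB Require Import structures.
From mathcomp Require Import all_boot all_order all_algebra.
From mathcomp Require Import all_classical all_reals all_analysis.
Set Implicit Arguments. Unset Strict Implicit. Unset Printing Implicit Defensive.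
Import Order.TTheory GRing.Theory Num.Theory.
Import numFieldNormedType.Exports.
Local Open Scope classical_set_scope.
Local Open Scope ring_scope.

Section Defs.
Variable R : realType.

Definition convex_on (S : set R) (f : R -> R) :=
  forall x y t, S x -> S y -> 0 <= t <= 1 ->
    f (t * x + (1 - t) * y) <= t * f x + (1 - t) * f y.

Definition nonincr_on (S : set R) (f : R -> R) :=
  forall x y, S x -> S y -> x <= y -> f y <= f x.

(* n-monotonicity on [0, +oo) (McNeil--Neslehova): f continuous on [0,oo),
   (n-2)-times differentiable on (0,oo), (-1)^k f^(k) >= 0 for k = 0..n-2,
   and (-1)^(n-2) f^(n-2) nonincreasing and convex on (0,oo). *)
Definition n_monotone (n : nat) (f : R -> R) :=
  [/\ {within `[0, +oo[, continuous f} /\ (forall x, 0 <= x -> 0 <= f x),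
      (forall k x, (k < n - 2)%N -> 0 < x -> derivable (derive1n k f) x 1),
      (forall k x, (k <= n - 2)%N -> 0 < x -> 0 <= (-1) ^+ k * derive1n k f x),
      nonincr_on `]0, +oo[ (fun x => (-1) ^+ (n - 2) * derive1n (n - 2) f x) &
      convex_on `]0, +oo[ (fun x => (-1) ^+ (n - 2) * derive1n (n - 2) f x)].

Definition archimedean_generator (n : nat) (phi : R -> R) :=
  [/\ n_monotone n phi,
      (forall x, 0 <= x -> 0 <= phi x <= 1),
      phi 0 = 1 &
      phi x @[x --> +oo] --> (0 : R)].

(* pseudo-inverse psi(y) = inf {x >= 0 | phi x = y}, valued in [0, +oo]
   (inf of the empty set is +oo, e.g. psi(0) = +oo for strict generators) *)
Definition pseudo_inv (phi : R -> R) (y : R) : \bar R :=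
  ereal_inf ((fun x : R => x%:E) @` [set x | 0 <= x /\ phi x = y]).

(* phi extended to [0, +oo] by phi(+oo) = lim_{x->oo} phi x = 0 *)
Definition phiE (phi : R -> R) (e : \bar R) : R :=
  match e with
  | EFin r => phi r
  | +oo%E => 0
  | -oo%E => 1
  end.

Definition log_convex (phi : R -> R) :=
  (forall x, 0 <= x -> 0 < phi x) /\ convex_on `[0, +oo[ (fun x => ln (phi x)).

Definition super_additive (h : R -> \bar R) :=
  forall x y : R, 0 <= x -> 0 <= y -> (h x + h y <= h (x + y)%R)%E.

Definition abs_cont_df_nonneg (G : R -> R) :=
  [/\ (exists g : R -> R, (forall t, 0 <= g t) /\ measurable_fun setT g /\
        forall x, (G x)%:E =
          (\int[@lebesgue_measure R]_(t in `]-oo, x]) (g t)%:E)%E),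
      (forall x, x < 0 -> G x = 0) &
      G x @[x --> +oo] --> (1 : R)].

Definition seqmax (s : seq R) : R := \big[Num.max/head 0 s]_(x <- s) x.
Definition order_max (T : Type) (n : nat) (X : 'I_n -> T -> R) (w : T) : R :=
  seqmax [seq X i w | i <- enum 'I_n].

Definition st_le d1 d2 (T1 : measurableType d1) (T2 : measurableType d2)
  (P1 : probability T1 R) (X : T1 -> R) (P2 : probability T2 R) (Y : T2 -> R) :=
  forall x : R, (P1 [set w | (x < X w)%R] <= P2 [set w | (x < Y w)%R])%E.

Definition has_joint_df d (T : measurableType d) (P : probability T R) (n : nat)
  (X : 'I_n -> T -> R) (phi : R -> R) (G : R -> R) (alpha : 'I_n -> R) :=
  (forall i, measurable_fun setT (X i)) /\
  forall x : 'I_n -> R,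
    P [set w | forall i, X i w <= x i] =
    (phiE phi (\sum_(i < n) pseudo_inv phi (G (x i) `^ alpha i))%E)%:E.

Definition decr (n : nat) (a : 'I_n -> R) : seq R :=
  sort (fun x y : R => y <= x) [seq a i | i <- enum 'I_n].

Definition weakly_prod_dominated (n : nat) (b a : 'I_n -> R) :=
  forall j, (1 <= j <= n)%N ->
    \prod_(x <- take j (decr b)) x <= \prod_(x <- take j (decr a)) x.

End Defs.

(* P (X_{n:n} <= x) is the diagonal of the joint distribution function:
   phi1 (sum_i psi1 (t ^ alpha_i)) with t = G x, and likewise for X*. So it suffices to show
   phi1 (sum_i psi1 (t ^ alpha_i)) <= phi2 (sum_i psi2 (t ^ alpha*_i)) for t >= 0, and two
   moves do this. Super-additivity of psi2 o phi1 gives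
   phi1 (sum_i psi1 y_i) <= phi2 (sum_i psi2 y_i) for every y, which changes the generator.
   If phi is log-convex and 0 < t <= 1, then u |-> psi (t ^ exp u) is convex and
   nondecreasing, while the product condition says that ln alpha* is weakly submajorized by
   ln alpha; the Tomic-Weyl inequality gives sum_i psi (t ^ alpha*_i) <= sum_i psi (t ^ alpha_i),
   and as a log-convex generator is nonincreasing, this changes the exponents on the side of
   the log-convex generator. *)

From HB Require Import structures.
From mathcomp Require Import all_boot all_order all_algebra.
From mathcomp Require Import all_classical all_reals all_analysis.
From mathcomp Require Import ring lra.
Set Implicit Arguments. Unset Strict Implicit. Unset Printing Implicit Defensive.
Import Order.TTheory GRing.Theory Num.Theory.
Import numFieldNormedType.Exports.
Local Open Scope classical_set_scope.
Local Open Scope ring_scope.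

Section GeneratorPseudoInverse.
Variables (R : realType) (phi : R -> R).

Lemma pseudo_inv_ge0 y : (0 <= pseudo_inv phi y)%E.
Proof. by apply: le_ereal_inf_tmp => _ [x [x0 _] <-]; rewrite lee_fin. Qed.

Hypothesis phi_cont : {within `[0, +oo[, continuous phi}.
Hypothesis phi0 : phi 0 = 1.

Lemma ivt_phi z y : 0 <= z -> phi z <= y <= 1 ->
  exists2 c, 0 <= c <= z & phi c = y.
Proof.
move=> z0 /andP[zy y1].
have cz : {within `[0, z], continuous phi}.
  by apply: continuous_subspaceW phi_cont => x /=; rewrite !in_itv /= => /andP[->].
have [|c] := @IVT _ _ _ _ y z0 cz; last by rewrite in_itv /=; exists c.
by rewrite phi0 ge_min zy le_max y1 orbT.
Qed.

Lemma pseudo_inv_le y z : 0 <= z -> phi z <= y <= 1 ->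
  (pseudo_inv phi y <= z%:E)%E.
Proof.
move=> z0 /(ivt_phi z0)[c /andP[c0 cz] <-].
by apply: ereal_inf_le; exists c%:E; [exists c | rewrite lee_fin].
Qed.

Lemma le_phi_of_le_pseudo_inv y w : y <= 1 -> 0 <= w ->
  (w%:E <= pseudo_inv phi y)%E -> y <= phi w.
Proof.
move=> y1 w0 wy; rewrite leNgt; apply/negP => pw.
have [|c /andP[c0 cw] pc] := ivt_phi (y := y) w0; first by rewrite (ltW pw) y1.
have /(le_trans wy) : (pseudo_inv phi y <= c%:E)%E by apply: pseudo_inv_le; rewrite ?pc ?lexx.
rewrite lee_fin => wc; move: pw; rewrite -pc.
suff -> : c = w by rewrite ltxx.
by apply/eqP; rewrite eq_le cw wc.
Qed.

Lemma pseudo_inv_attained y : pseudo_inv phi y != +oo%E ->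
  exists x, [/\ 0 <= x, phi x = y & pseudo_inv phi y = x%:E].
Proof.
rewrite /pseudo_inv; set A := [set x | 0 <= x /\ phi x = y].
have [->|/set0P A0 _] := eqVneq A set0; first by rewrite image_set0 ereal_inf0 eqxx.
have lbA : has_lbound A by exists 0 => x [].
have m0 : 0 <= inf A by apply: lb_le_inf => // x [].
rewrite ereal_inf_EFin //; exists (inf A); split => //.
apply/eqP/negPn/negP => phim.
have e0 : 0 < `|phi (inf A) - y| by rewrite normr_gt0 subr_eq0.
have := (subspace_continuousP _ _).1 phi_cont (inf A).
rewrite /= in_itv /= andbT => /(_ m0) /cvgrPdist_lt /(_ _ e0).
rewrite near_withinE => /nbhs_ballP [d /= d0 hd].
have [a [a0 pa] ad] := inf_adherent d0 (conj A0 lbA).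
have ma : inf A <= a by apply: ge_inf.
have /hd : ball (inf A) d a by rewrite /ball /= distrC ger0_norm ?subr_ge0 // ltrBlDl.
by rewrite /from_subspace in_itv /= a0 pa ltxx => /(_ isT).
Qed.

Hypothesis phi_range : forall x, 0 <= x -> 0 <= phi x <= 1.

Lemma pseudo_inv_gt1 y : 1 < y -> pseudo_inv phi y = +oo%E.
Proof.
move=> y1; rewrite /pseudo_inv.
suff -> : [set x | 0 <= x /\ phi x = y] = set0 by rewrite image_set0 ereal_inf0.
apply/seteqP; split => // x [/phi_range + px]; rewrite px => /andP[_].
by rewrite leNgt y1.
Qed.

Lemma phiE_ge0 W : (0 <= W)%E -> 0 <= phiE phi W.
Proof. by case: W => [w| |] //=; rewrite lee_fin => /phi_range /andP[]. Qed.

Hypothesis phi_cvg0 : phi x @[x --> +oo] --> (0 : R).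

Lemma pseudo_inv_neqy y : 0 < y <= 1 -> pseudo_inv phi y != +oo%E.
Proof.
move=> /andP[y0 y1].
have /filter_ex [z [z0 pz]] : \forall t \near +oo, 0 < t /\ phi t < y.
  by apply/near_andP; split; [exact: nbhs_pinfty_gt | exact: cvgr_lt phi_cvg0 _ y0].
have := @pseudo_inv_le y z (ltW z0); rewrite (ltW pz) y1 => /(_ isT).
by case: (pseudo_inv phi y).
Qed.

Lemma le_phiE_of_le_pseudo_inv y W : 0 <= y <= 1 -> (0 <= W)%E ->
  (W <= pseudo_inv phi y)%E -> y <= phiE phi W.
Proof.
move=> /andP[y0 y1]; case: W => [w| |] //=.
  by rewrite lee_fin => w0; apply: le_phi_of_le_pseudo_inv.
move=> _; rewrite leye_eq; have [<-//|y0'] := eqVneq 0 y.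
by apply: contraLR => _; apply: pseudo_inv_neqy; rewrite lt_neqAle y0' y0 y1.
Qed.

Section LogConvex.
Hypothesis phi_lc : log_convex phi.

Lemma log_convex_nonincr x y : 0 <= x -> x <= y -> phi y <= phi x.
Proof.
case: phi_lc => phi_gt0 phi_cvx x0 xy; rewrite leNgt; apply/negP => pxy.
have y0 : 0 <= y := le_trans x0 xy.
have /filter_ex [z [yz pz]] : \forall t \near +oo, y < t /\ phi t < phi y.
  apply/near_andP; split; first exact/nbhs_pinfty_gt/num_real.
  exact: cvgr_lt phi_cvg0 _ (phi_gt0 _ y0).
have xy' : x < y by rewrite lt_neqAle xy andbT; apply: contraTneq pxy => ->; rewrite ltxx.
have z0 : 0 <= z := le_trans y0 (ltW yz).
pose l := (z - y) / (z - x).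
have l01 : 0 <= l <= 1 by rewrite divr_ge0 ?ler_pdivrMr ?mul1r /=; lra.
have := phi_cvx x z l; rewrite /= !in_itv /= x0 z0 => /(_ isT isT l01).
have -> : l * x + (1 - l) * z = y by rewrite /l; field; lra.
have lnx : ln (phi x) < ln (phi y) by rewrite ltr_ln ?posrE ?phi_gt0.
have lnz : ln (phi z) < ln (phi y) by rewrite ltr_ln ?posrE ?phi_gt0.
have l0 : 0 < l by rewrite divr_gt0 //; lra.
have : l * ln (phi x) + (1 - l) * ln (phi z) < l * ln (phi y) + (1 - l) * ln (phi y).
  by rewrite ltr_leD ?ltr_pM2l // ler_wpM2l ?subr_ge0 ?(ltW lnz); case/andP: l01.
by rewrite -mulrDl subrKC mul1r ltNge => /negP.
Qed.

Lemma phiE_nonincr V W : (0 <= V)%E -> (V <= W)%E -> phiE phi W <= phiE phi V.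
Proof.
case: W => [w| |] /=; last by rewrite leeNy_eq => _ /eqP ->.
- by case: V => [v| |] //=; rewrite !lee_fin; apply: log_convex_nonincr.
- by move=> V0 _; apply: phiE_ge0.
Qed.

End LogConvex.

(* [done] and [//] must not be run on goals mentioning [pseudo_inv_powexp]: they try to
   unfold the infimum and take minutes, so such goals are closed by explicit terms. *)
Definition pseudo_inv_powexp t u := fine (pseudo_inv phi (t `^ expR u)).

Section UnitIntervalBase.
Variable t : R.
Hypothesis t01 : 0 < t <= 1.

Lemma powR_unit_le1 x : 0 <= x -> t `^ x <= 1.
Proof. by move=> x0; rewrite -(powRr0 t) ger_powR. Qed.

Lemma pseudo_inv_powexpE u :
  [/\ 0 <= pseudo_inv_powexp t u, phi (pseudo_inv_powexp t u) = t `^ expR u &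
      pseudo_inv phi (t `^ expR u) = (pseudo_inv_powexp t u)%:E].
Proof.
have /pseudo_inv_attained [x [x0 px xE]] : pseudo_inv phi (t `^ expR u) != +oo%E.
  by apply: pseudo_inv_neqy; rewrite powR_gt0 ?powR_unit_le1 ?expR_ge0; case/andP: t01.
by rewrite /pseudo_inv_powexp xE.
Qed.

Lemma pseudo_inv_powexp_nondecr : {homo pseudo_inv_powexp t : u v / u <= v}.
Proof.
move=> u v uv; have [_ _ uE] := pseudo_inv_powexpE u; have [gv0 pv _] := pseudo_inv_powexpE v.
have := pseudo_inv_le (y := t `^ expR u) gv0; rewrite uE lee_fin; apply.
by rewrite pv ger_powR ?ler_expR ?powR_unit_le1 ?expR_ge0.
Qed.

Lemma log_convex_powexp_combination x1 x2 u1 u2 l : log_convex phi ->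
  0 <= x1 -> 0 <= x2 -> phi x1 = t `^ expR u1 -> phi x2 = t `^ expR u2 -> 0 <= l <= 1 ->
  phi (l * x1 + (1 - l) * x2) <= t `^ expR (l * u1 + (1 - l) * u2).
Proof.
case=> phi_gt0 phi_cvx x10 x20 p1 p2 /[dup] l01 /andP[l0 l1].
have x0 : 0 <= l * x1 + (1 - l) * x2 by rewrite addr_ge0 ?mulr_ge0 ?subr_ge0.
rewrite -ler_ln ?posrE ?phi_gt0 ?powR_gt0 //; last by case/andP: t01.
have := phi_cvx x1 x2 l; rewrite /= !in_itv /= x10 x20 p1 p2 !ln_powR => /(_ isT isT l01).
have exp_cvx : expR (l * u1 + (1 - l) * u2) <= l * expR u1 + (1 - l) * expR u2 :=
  convex_expR (Itv01 l0 l1) u1 u2.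
move=> /le_trans; apply; rewrite !mulrA -mulrDl ler_wnM2r ?ln_le0 //.
by case/andP: t01.
Qed.

Lemma pseudo_inv_powexp_convex : log_convex phi -> convex_on setT (pseudo_inv_powexp t).
Proof.
move=> phi_lc u1 u2 l _ _ /[dup] l01 /andP[l0 l1].
have [x10 p1 _] := pseudo_inv_powexpE u1; have [x20 p2 _] := pseudo_inv_powexpE u2.
have [_ _ mE] := pseudo_inv_powexpE (l * u1 + (1 - l) * u2).
have l'0 : 0 <= 1 - l by rewrite subr_ge0.
have x0 : 0 <= l * pseudo_inv_powexp t u1 + (1 - l) * pseudo_inv_powexp t u2 :=
  addr_ge0 (mulr_ge0 l0 x10) (mulr_ge0 l'0 x20).
have := pseudo_inv_le (y := t `^ expR (l * u1 + (1 - l) * u2)) x0; rewrite mE lee_fin; apply.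
by rewrite log_convex_powexp_combination ?powR_unit_le1 ?expR_ge0.
Qed.

End UnitIntervalBase.

End GeneratorPseudoInverse.

Section TomicWeyl.
Variables (R : realType) (g : R -> R).
Hypothesis g_convex : convex_on setT g.
Hypothesis g_nondecr : {homo g : x y / x <= y}.

Definition slope x y := (g y - g x) / (y - x).

Lemma convex_three_point x y z : x < y -> y < z ->
  (z - x) * g y <= (z - y) * g x + (y - x) * g z.
Proof.
move=> xy yz; pose l := (z - y) / (z - x).
have zx : 0 < z - x by lra.
have l01 : 0 <= l <= 1 by rewrite divr_ge0 ?ler_pdivrMr ?mul1r /=; lra.
have := g_convex (x := x) (y := z) I I l01.
have -> : l * x + (1 - l) * z = y by rewrite /l; field; lra.
move=> /(ler_wpM2l (ltW zx)).
by have -> : (z - x) * (l * g x + (1 - l) * g z) = (z - y) * g x + (y - x) * g z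
  by rewrite /l; field; lra.
Qed.

Lemma slope_le_next x y z : x < y -> y < z -> slope x y <= slope y z.
Proof.
move=> xy yz; have := convex_three_point xy yz.
by rewrite /slope ler_pdivlMr ?subr_gt0 // mulrAC ler_pdivrMr ?subr_gt0 //; lra.
Qed.

Lemma slope_le_chord x y z : x < y -> y < z -> slope x y <= slope x z.
Proof.
move=> xy yz; have := convex_three_point xy yz.
by rewrite /slope ler_pdivlMr ?subr_gt0 ?(lt_trans xy) // mulrAC ler_pdivrMr ?subr_gt0 //; lra.
Qed.

Definition left_slope x := sup [set slope y x | y in [set y | y < x]].

Lemma has_sup_left_slopes x : has_sup [set slope y x | y in [set y | y < x]].
Proof.
split; first by exists (slope (x - 1) x), (x - 1) => /=; lra.
by exists (slope x (x + 1)) => _ [y yx <-]; apply: slope_le_next => //; lra.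
Qed.

Lemma slope_le_left_slope y x : y < x -> slope y x <= left_slope x.
Proof. by move=> yx; apply: ub_le_sup; [case: (has_sup_left_slopes x) | exists y]. Qed.

Lemma left_slope_le_slope x z : x < z -> left_slope x <= slope x z.
Proof.
move=> xz; apply: ge_sup; first by case: (has_sup_left_slopes x).
by move=> _ [y yx <-]; apply: slope_le_next.
Qed.

Lemma left_slope_subgradient x u : g x + left_slope x * (u - x) <= g u.
Proof.
case: (ltgtP u x) => [ux|xu|->]; last by rewrite subrr mulr0 addr0.
- have := slope_le_left_slope ux; rewrite /slope ler_pdivrMr ?subr_gt0 //; lra.
- have := left_slope_le_slope xu; rewrite /slope ler_pdivlMr ?subr_gt0 //; lra.
Qed.

Lemma left_slope_nondecr : {homo left_slope : x x' / x <= x'}.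
Proof.
move=> x x' xx'; apply: ge_sup; first by case: (has_sup_left_slopes x).
move=> _ [y yx <-]; case: (ltgtP x x') => [lt|gt|<-]; last exact: slope_le_left_slope.
- exact: le_trans (slope_le_chord yx lt) (slope_le_left_slope (lt_trans yx lt)).
- by move: xx'; rewrite leNgt gt.
Qed.

Lemma left_slope_ge0 x : 0 <= left_slope x.
Proof.
apply: le_trans (slope_le_left_slope (y := x - 1) _); last lra.
by rewrite /slope divr_ge0 ?subr_ge0 ?g_nondecr //; lra.
Qed.

(* D is the slack in the prefix-sum inequalities and c bounds the slopes along v:
   this is the form of the inequality that survives the induction. *)
Lemma tomic_weyl_slack (v u : seq R) (D c : R) : size u = size v ->
  sorted >=%R v -> 0 <= D -> 0 <= c -> (forall x, x \in v -> left_slope x <= c) ->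
  (forall j, \sum_(x <- take j v) x <= D + \sum_(x <- take j u) x) ->
  \sum_(x <- v) g x <= c * D + \sum_(x <- u) g x.
Proof.
elim: v u D c => [|y v IH] [|x u] D c //=.
  by move=> _ _ D0 c0 _ _; rewrite !big_nil addr0 mulr_ge0.
move=> [size_uv] sorted_yv D0 c0 slope_c prefix.
have yx : y <= D + x by have := prefix 1%N; rewrite /= !take0 !big_seq1.
have v_le_y : all (<= y) v := order_path_min (rev_trans le_trans) sorted_yv.
have slope_y z : z \in v -> left_slope z <= left_slope y.
  by move=> zv; apply: left_slope_nondecr; apply: (allP v_le_y).
have := IH u (D + x - y) (left_slope y) size_uv (path_sorted sorted_yv).
rewrite subr_ge0 yx left_slope_ge0 => /(_ isT isT slope_y) IHv.
have {IHv} : \sum_(z <- v) g z <= left_slope y * (D + x - y) + \sum_(z <- u) g z.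
  by apply: IHv => j; have := prefix j.+1; rewrite /= !big_cons; lra.
have := left_slope_subgradient y x.
have : left_slope y * D <= c * D by rewrite ler_wpM2r // slope_c // mem_head.
rewrite !big_cons; lra.
Qed.

Lemma tomic_weyl (v u : seq R) : size u = size v -> sorted >=%R v ->
  (forall j, \sum_(x <- take j v) x <= \sum_(x <- take j u) x) ->
  \sum_(x <- v) g x <= \sum_(x <- u) g x.
Proof.
move=> size_uv sorted_v prefix.
have := @tomic_weyl_slack v u 0 (\sum_(x <- v) left_slope x) size_uv sorted_v.
rewrite mulr0 add0r; apply => //; last by move=> j; rewrite add0r.
  by rewrite sumr_ge0 // => x _; apply: left_slope_ge0.
move=> x xv; rewrite (big_rem x) //= lerDl sumr_ge0 // => z _; exact: left_slope_ge0.
Qed.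

End TomicWeyl.

Section LogMajorization.
Variables (R : realType) (n : nat).

Lemma size_decr (c : 'I_n -> R) : size (decr c) = n.
Proof. by rewrite size_sort size_map size_enum_ord. Qed.

Lemma sum_decr (F : R -> R) (c : 'I_n -> R) :
  \sum_(i < n) F (c i) = \sum_(x <- decr c) F x.
Proof. by rewrite (perm_big _ (permEl (perm_sort _ _))) big_map big_enum. Qed.

Lemma all_decr_gt0 (c : 'I_n -> R) : (forall i, 0 < c i) -> all (> 0) (decr c).
Proof. by move=> c_gt0; rewrite all_sort all_map; apply/allP => i _; apply: c_gt0. Qed.

Lemma sorted_ln_decr (c : 'I_n -> R) : (forall i, 0 < c i) ->
  sorted >=%R (map (@ln R) (decr c)).
Proof.
move=> c_gt0; rewrite sorted_map.
apply: (sub_in_sorted (P := (> 0)) (e := >=%R)) (all_decr_gt0 c_gt0) _.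
  by move=> x y x0 y0 /=; rewrite ler_ln.
by apply: sort_sorted => x y; apply: le_total.
Qed.

Lemma ln_prod (s : seq R) : all (> 0) s -> ln (\prod_(x <- s) x) = \sum_(x <- s) ln x.
Proof.
elim: s => [|a s IH] /=; first by rewrite !big_nil ln1.
move=> /andP[a0 s0]; rewrite !big_cons lnM ?IH // posrE.
by rewrite big_seq prodr_gt0 // => x /(allP s0).
Qed.

Lemma weakly_prod_dominated_ln (a b : 'I_n -> R) :
  (forall i, 0 < a i) -> (forall i, 0 < b i) -> weakly_prod_dominated b a ->
  forall j, \sum_(x <- take j (map (@ln R) (decr b))) x <=
            \sum_(x <- take j (map (@ln R) (decr a))) x.
Proof.
move=> a_gt0 b_gt0 dom j.
have take_gt0 (c : 'I_n -> R) : (forall i, 0 < c i) -> all (> 0) (take j (decr c)).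
  by move=> c_gt0; apply/allP => x /mem_take /(allP (all_decr_gt0 c_gt0)).
have prod_gt0 (c : 'I_n -> R) : (forall i, 0 < c i) -> 0 < \prod_(x <- take j (decr c)) x.
  by move=> c_gt0; rewrite big_seq prodr_gt0 // => x /(allP (take_gt0 c c_gt0)).
rewrite -!map_take !big_map -!ln_prod ?take_gt0 // ler_ln ?posrE ?prod_gt0 //.
have take_minn (c : 'I_n -> R) : take j (decr c) = take (minn j n) (decr c).
  by rewrite take_min [take n _]take_oversize ?size_decr.
rewrite !take_minn; case: (posnP (minn j n)) => [->|jn]; first by rewrite !take0.
by apply: dom; rewrite jn geq_minr.
Qed.

Lemma log_majorization (g : R -> R) (a b : 'I_n -> R) :
  convex_on setT g -> {homo g : x y / x <= y} ->
  (forall i, 0 < a i) -> (forall i, 0 < b i) -> weakly_prod_dominated b a ->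
  \sum_(i < n) g (ln (b i)) <= \sum_(i < n) g (ln (a i)).
Proof.
move=> g_convex g_nondecr a_gt0 b_gt0 dom.
rewrite !(sum_decr (g \o @ln R)) -!(big_map (@ln R) xpredT g).
apply: tomic_weyl => //; first by rewrite !size_map !size_decr.
  exact: sorted_ln_decr.
exact: weakly_prod_dominated_ln.
Qed.

End LogMajorization.

Section ArchimedeanGenerator.
Variables (R : realType) (m : nat) (phi : R -> R).
Hypothesis gen : archimedean_generator m phi.

Let phi_cont : {within `[0, +oo[, continuous phi}. Proof. by case: gen => [[[]]]. Qed.
Let phi_range x : 0 <= x -> 0 <= phi x <= 1. Proof. by case: gen => _ + _ _; apply. Qed.
Let phi0 : phi 0 = 1. Proof. by case: gen. Qed.
Let phi_cvg0 : phi x @[x --> +oo] --> (0 : R). Proof. by case: gen. Qed.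

Lemma sum_pseudo_inv_powR_le n (a b : 'I_n -> R) t : log_convex phi ->
  (forall i, 0 < a i) -> (forall i, 0 < b i) -> weakly_prod_dominated b a -> 0 <= t ->
  (\sum_(i < n) pseudo_inv phi (t `^ b i) <= \sum_(i < n) pseudo_inv phi (t `^ a i))%E.
Proof.
move=> phi_lc a_gt0 b_gt0 dom; rewrite le_eqVlt => /predU1P [<-|t_gt0].
  by apply: lee_sum => i _; rewrite !powR0 ?gt_eqF.
have [t1|t_gt1] := leP t 1.
  have t01 : 0 < t <= 1 by rewrite t_gt0 t1.
  have psiE (c : 'I_n -> R) : (forall i, 0 < c i) -> (\sum_(i < n) pseudo_inv phi (t `^ c i) =
      (\sum_(i < n) pseudo_inv_powexp phi t (ln (c i)))%:E)%E.
    move=> c_gt0; rewrite -sumEFin; apply: eq_bigr => i _.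
    have [_ _ E] := pseudo_inv_powexpE phi_cont phi0 phi_cvg0 t01 (ln (c i)).
    rewrite lnK in E; first exact: E.
    by rewrite posrE c_gt0.
  rewrite (psiE _ a_gt0) (psiE _ b_gt0) lee_fin.
  apply: log_majorization a_gt0 b_gt0 dom.
    exact: pseudo_inv_powexp_convex.
  exact: pseudo_inv_powexp_nondecr.
have psi_oo (c : 'I_n -> R) i : 0 < c i -> pseudo_inv phi (t `^ c i) = +oo%E.
  move=> ci_gt0; apply: (pseudo_inv_gt1 phi_range).
  by rewrite /powR gt_eqF // expR_gt1 mulr_gt0 // ln_gt0.
by apply: lee_sum => i _; rewrite (psi_oo _ _ (a_gt0 i)) leey.
Qed.

Lemma phiE_sum_pseudo_inv_powR_le n (a b : 'I_n -> R) t : log_convex phi ->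
  (forall i, 0 < a i) -> (forall i, 0 < b i) -> weakly_prod_dominated b a -> 0 <= t ->
  phiE phi (\sum_(i < n) pseudo_inv phi (t `^ a i)) <=
  phiE phi (\sum_(i < n) pseudo_inv phi (t `^ b i)).
Proof.
move=> phi_lc a_gt0 b_gt0 dom t0; apply: (phiE_nonincr phi_range phi_cvg0 phi_lc).
  by rewrite sume_ge0 // => i _; apply: pseudo_inv_ge0.
exact: sum_pseudo_inv_powR_le.
Qed.

End ArchimedeanGenerator.

Section Comparison.
Variables (R : realType) (m : nat) (phi1 phi2 : R -> R).
Hypothesis gen1 : archimedean_generator m phi1.
Hypothesis gen2 : archimedean_generator m phi2.
Hypothesis sadd : super_additive (fun x => pseudo_inv phi2 (phi1 x)).

Lemma sum_pseudo_inv_comp_le (I : Type) (r : seq I) (s : I -> R) : (forall i, 0 <= s i) ->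
  (\sum_(i <- r) pseudo_inv phi2 (phi1 (s i)) <= pseudo_inv phi2 (phi1 (\sum_(i <- r) s i)))%E.
Proof.
move=> s0; elim: r => [|a r IH]; first by rewrite !big_nil pseudo_inv_ge0.
rewrite !big_cons; apply: le_trans (sadd (s0 a) (sumr_ge0 _ (fun i _ => s0 i))).
by rewrite leeD2l.
Qed.

Let phi1_cont : {within `[0, +oo[, continuous phi1}. Proof. by case: gen1 => [[[]]]. Qed.
Let phi1_range x : 0 <= x -> 0 <= phi1 x <= 1. Proof. by case: gen1 => _ + _ _; apply. Qed.
Let phi2_cont : {within `[0, +oo[, continuous phi2}. Proof. by case: gen2 => [[[]]]. Qed.
Let phi2_range x : 0 <= x -> 0 <= phi2 x <= 1. Proof. by case: gen2 => _ + _ _; apply. Qed.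
Let phi2_0 : phi2 0 = 1. Proof. by case: gen2. Qed.
Let phi2_cvg0 : phi2 x @[x --> +oo] --> (0 : R). Proof. by case: gen2. Qed.

Lemma phiE_sum_pseudo_inv_le (I : eqType) (r : seq I) (y : I -> R) :
  phiE phi1 (\sum_(i <- r) pseudo_inv phi1 (y i)) <=
  phiE phi2 (\sum_(i <- r) pseudo_inv phi2 (y i)).
Proof.
have psi2_ge0 : (0 <= \sum_(i <- r) pseudo_inv phi2 (y i))%E.
  by rewrite sume_ge0 // => i _; apply: pseudo_inv_ge0.
have [->|sum_fin] := eqVneq (\sum_(i <- r) pseudo_inv phi1 (y i))%E +oo%E.
  exact: phiE_ge0 phi2_range _ psi2_ge0.
pose s i := fine (pseudo_inv phi1 (y i)).
have s0 i : 0 <= s i by rewrite fine_ge0 ?pseudo_inv_ge0.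
have sE i : i \in r -> pseudo_inv phi1 (y i) = (s i)%:E /\ phi1 (s i) = y i.
  move=> ir; have /(pseudo_inv_attained phi1_cont) [x [_ px xE]] : pseudo_inv phi1 (y i) != +oo%E.
    apply: contra sum_fin => /eqP yi; apply/eqP/esum_eqyP; last by exists i.
    by move=> j _; rewrite gt_eqF // (lt_le_trans _ (pseudo_inv_ge0 _ _)).
  by rewrite /s xE.
rewrite (eq_big_seq (fun i => (s i)%:E)); last by move=> i /sE[].
rewrite sumEFin /=; apply: (le_phiE_of_le_pseudo_inv phi2_cont phi2_0 phi2_cvg0 _ psi2_ge0).
  exact/phi1_range/sumr_ge0.
rewrite (eq_big_seq (fun i => pseudo_inv phi2 (phi1 (s i)))).
  exact: sum_pseudo_inv_comp_le.
by move=> i /sE[_ ->].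
Qed.

Lemma phiE_sum_pseudo_inv_powR_mixed_le n (a b : 'I_n -> R) t :
  log_convex phi1 \/ log_convex phi2 ->
  (forall i, 0 < a i) -> (forall i, 0 < b i) -> weakly_prod_dominated b a -> 0 <= t ->
  phiE phi1 (\sum_(i < n) pseudo_inv phi1 (t `^ a i)) <=
  phiE phi2 (\sum_(i < n) pseudo_inv phi2 (t `^ b i)).
Proof.
move=> [lc1|lc2] a_gt0 b_gt0 dom t0.
- exact: le_trans (phiE_sum_pseudo_inv_powR_le gen1 lc1 a_gt0 b_gt0 dom t0)
    (phiE_sum_pseudo_inv_le _ _).
- exact: le_trans (phiE_sum_pseudo_inv_le _ _)
    (phiE_sum_pseudo_inv_powR_le gen2 lc2 a_gt0 b_gt0 dom t0).
Qed.

End Comparison.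

Lemma bigmax_seq_le (R : realType) (s : seq R) (x0 r : R) :
  (\big[Num.max/x0]_(x <- s) x <= r) = (x0 <= r) && all (<= r) s.
Proof.
elim: s => [|a s IH]; first by rewrite big_nil andbT.
by rewrite big_cons /= ge_max IH andbCA.
Qed.

Lemma order_max_le (R : realType) (T : Type) n (X : 'I_n -> T -> R) w r : (0 < n)%N ->
  (order_max X w <= r) = [forall i, X i w <= r].
Proof.
move=> n_gt0; rewrite /order_max /seqmax bigmax_seq_le.
set s := [seq X i w | i <- enum 'I_n].
have -> : all (<= r) s = [forall i, X i w <= r].
  by rewrite all_map; apply/allP/forallP => [h i|h i _]; [apply: h; rewrite mem_enum | apply: h].
have s_head : head 0 s \in s.
  by rewrite -nth0 mem_nth // size_map size_enum_ord.
case: (boolP [forall i, _]) => [/forallP Xr|]; last by rewrite andbF.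
by rewrite andbT; move: s_head => /mapP[i _ ->]; apply: Xr.
Qed.

Lemma measurable_all_le (R : realType) d (T : measurableType d) n (X : 'I_n -> T -> R) r :
  (forall i, measurable_fun setT (X i)) -> measurable [set w | forall i, X i w <= r].
Proof.
move=> mX; have -> : [set w | forall i, X i w <= r] = \bigcap_(i in setT) (X i @^-1` `]-oo, r]).
  by apply/seteqP; split => [w Xr i _|w Xr i]; rewrite /= ?in_itv //=; have := Xr i I; rewrite /= in_itv.
apply: fin_bigcap_measurable => [|i _]; first exact: finite_finset.
by rewrite -[_ @^-1` _]setTI; apply: mX.
Qed.

Lemma probability_order_max_gt (R : realType) d (T : measurableType d) (P : probability T R)
  n (X : 'I_n -> T -> R) r : (0 < n)%N -> (forall i, measurable_fun setT (X i)) ->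
  P [set w | r < order_max X w] = (1 - P [set w | forall i, (X i w <= r)%R])%E.
Proof.
move=> n_gt0 mX; rewrite -probability_setC; last exact: measurable_all_le.
congr (P _); apply/seteqP; split => w /=.
  by rewrite ltNge order_max_le // => /negP Xr Xw; apply/Xr/forallP.
by move=> Xr; rewrite ltNge order_max_le //; apply/negP => /forallP.
Qed.

Lemma abs_cont_df_nonneg_ge0 (R : realType) (G : R -> R) x : abs_cont_df_nonneg G -> 0 <= G x.
Proof.
case=> [[g [g0 [_ Gg]]] _ _]; rewrite -lee_fin Gg.
by apply: integral_ge0 => t _; rewrite lee_fin.
Qed.

Unset Implicit Arguments.

Theorem mainTheorem14 (R : realType) (n : nat) (hn : (2 <= n)%N)
  (G : R -> R) (alpha alphas : 'I_n -> R)
  (phi1 phi2 : R -> R)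
  (d1 d2 : measure_display) (T1 : measurableType d1) (T2 : measurableType d2)
  (P1 : probability T1 R) (P2 : probability T2 R)
  (X : 'I_n -> T1 -> R) (Xs : 'I_n -> T2 -> R) :
  abs_cont_df_nonneg G ->
  (forall i, 0 < alpha i) -> (forall i, 0 < alphas i) ->
  archimedean_generator n phi1 -> archimedean_generator n phi2 ->
  has_joint_df P1 X phi1 G alpha ->
  has_joint_df P2 Xs phi2 G alphas ->
  log_convex phi1 \/ log_convex phi2 ->
  super_additive (fun x => pseudo_inv phi2 (phi1 x)) ->
  weakly_prod_dominated alphas alpha ->
  st_le P2 (order_max Xs) P1 (order_max X).
Proof.
move=> G_df a_gt0 b_gt0 gen1 gen2 [mX X_df] [mXs Xs_df] lc sadd dom r.
have n_gt0 : (0 < n)%N := ltnW hn.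
rewrite !probability_order_max_gt //.
have -> : P1 [set w | forall i, X i w <= r] =
  (phiE phi1 (\sum_(i < n) pseudo_inv phi1 (G r `^ alpha i)))%:E := X_df (fun=> r).
have -> : P2 [set w | forall i, Xs i w <= r] =
  (phiE phi2 (\sum_(i < n) pseudo_inv phi2 (G r `^ alphas i)))%:E := Xs_df (fun=> r).
rewrite -!EFinB lee_fin lerD2l lerN2.
exact: (phiE_sum_pseudo_inv_powR_mixed_le gen1 gen2 sadd lc a_gt0 b_gt0 dom (abs_cont_df_nonneg_ge0 r G_df)).
Qed.
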